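(* Let $\mathcal{G}\subseteq C(\mathbb{R},\mathbb{R})$ be nonempty. The following conditions are equivalent: (1) $\mathcal{K}_\mathcal{G}=\{\mathrm{CL}(\mathbb{R})\cap\mathcal{P}(X):X\subseteq\mathbb{R}\}$; (2) $\mathcal{G}$ is a complete and connected family, and for every $x\in\mathbb{R}$ there exists $f\in C(\mathbb{R},\mathbb{R})$ such that $f\setminus\bigcup\mathcal{G}=f\restriction\{x\}$ (i.e., $(x,f(x))$ is the only point of the graph of $f$ not in $\bigcup\mathcal{G}$).
   Context: Functions are identified with their graphs, so $\bigcup\mathcal{G}\subseteq\mathbb{R}^2$ is the union of graphs. $\mathrm{CL}(\mathbb{R})$ is the family of closed subsets of $\mathbb{R}$ and $\mathcal{P}(X)$ the power set of $X$. A family $\mathcal{G}\subseteq C(\mathbb{R},\mathbb{R})$ is complete if $g\in\mathcal{G}$ for every $g\in C(\mathbb{R},\mathbb{R})$ whose graph is contained in $\bigcup\mathcal{G}$; it is connected if for any $f,g\in\mathcal{G}$ and $x\neq y$ there is $h\in\mathcal{G}$ with $h(x)=f(x)$ and $h(y)=g(y)$. For $\mathcal{G}\subseteq C(\mathbb{R},\mathbb{R})$ let $R_\mathcal{G}=\{(f,E)\in C(\mathbb{R},\mathbb{R})\times\mathrm{CL}(\mathbb{R}):(\exists g\in\mathcal{G})\, f\restriction E=g\restriction E\}$; for $\mathcal{F}\subseteq C(\mathbb{R},\mathbb{R})$ put $E_\mathcal{G}(\mathcal{F})=\{E\in\mathrm{CL}(\mathbb{R}):(\forall f\in\mathcal{F})\,(f,E)\in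 R_\mathcal{G}\}$, and let $\mathcal{K}_\mathcal{G}=\{E_\mathcal{G}(\mathcal{F}):\mathcal{F}\subseteq C(\mathbb{R},\mathbb{R})\}$. *)

From Stdlib Require Import Reals Rtopology.
Open Scope R_scope.

Definition fam := (R -> R) -> Prop.

Definition cont_fam (G : fam) : Prop := forall g, G g -> continuity g.

Definition union_graphs (G : fam) (p : R * R) : Prop :=
  exists g, G g /\ snd p = g (fst p).

Definition complete (G : fam) : Prop :=
  forall g : R -> R, continuity g ->
    (forall x, union_graphs G (x, g x)) -> G g.

Definition connected (G : fam) : Prop :=
  forall f g, G f -> G g -> forall x y : R, x <> y ->
    exists h, G h /\ h x = f x /\ h y = g y.

Definition CL (E : R -> Prop) : Prop := closed_set E.

Definition R_G (G : fam) (f : R -> R) (E : R -> Prop) : Prop :=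
  continuity f /\ CL E /\
  exists g, G g /\ forall x, E x -> f x = g x.

Definition E_G (G : fam) (F : fam) (E : R -> Prop) : Prop :=
  CL E /\ forall f, F f -> R_G G f E.

Definition seteq (S T : (R -> Prop) -> Prop) : Prop := forall E, S E <-> T E.

Definition K_G (G : fam) (S : (R -> Prop) -> Prop) : Prop :=
  exists F : fam, cont_fam F /\ seteq S (E_G G F).

Definition CL_sub (X : R -> Prop) (E : R -> Prop) : Prop :=
  CL E /\ forall x, E x -> X x.

(* The heart is an extension theorem: if G is complete and connected, every continuous f
   whose graph over a closed set E lies in the union of G agrees on E with a member of G.
   Take f on E and, on each bounded gap (a, b) of E, a member of G through (a, f a) and
   (b, f b) whose distance to f a on [a, b] is within b - a of the least possible; unbounded
   gaps are filled by any member of G through their finite endpoint. Near a point z of E,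
   the members through (z, f z) and through the endpoints of a small gap can be glued, by
   connectedness and clamping, into a competitor that stays close to f z; so the chosen gap
   functions are uniformly close to f z, the result is continuous, and completeness puts it
   in G. With this theorem, E_G(F) consists of the closed sets of points over which every
   graph of F lies in the union of G, and CL(R) ∩ P(X) is E_G of the functions whose single
   defect lies outside X.
   Conversely, K_G is tested on one-element families: a line through two points gives
   connectedness, E = R gives completeness, and a family F with E_G(F) = CL(R) ∩ P(R \ {x})
   must contain a function whose only defect is at x. *)

From Stdlib Require Import Reals Rtopology Lra.
From Stdlib Require Import Classical ClassicalEpsilon FunctionalExtensionality PropExtensionality.
Open Scope R_scope.

Lemma continuity_pt_Rabs (phi : R -> R) x :
  continuity_pt phi x <->
  forall eps, 0 < eps -> exists del, 0 < del /\
    forall y, Rabs (y - x) < del -> Rabs (phi y - phi x) < eps.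
Proof.
  split; intros H eps Heps; destruct (H eps Heps) as [del [Hdel Hy]];
    exists del; split; [exact Hdel | | exact Hdel |].
  - intros y Hyx. destruct (Req_dec y x) as [-> | Hne].
    + rewrite Rminus_diag, Rabs_R0; exact Heps.
    + apply Hy. split; [split; [exact I | auto] | exact Hyx].
  - intros y [_ Hyx]. apply Hy, Hyx.
Qed.

Lemma continuity_pt_one_sided (phi : R -> R) x :
  (forall eps, 0 < eps -> exists del, 0 < del /\
     forall y, x < y < x + del -> Rabs (phi y - phi x) < eps) ->
  (forall eps, 0 < eps -> exists del, 0 < del /\
     forall y, x - del < y < x -> Rabs (phi y - phi x) < eps) ->
  continuity_pt phi x.
Proof.
  intros Hr Hl. apply continuity_pt_Rabs. intros eps Heps.
  destruct (Hr eps Heps) as [d1 [Hd1 H1]], (Hl eps Heps) as [d2 [Hd2 H2]].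
  exists (Rmin d1 d2). split; [apply Rmin_pos; assumption |].
  intros y Hy. pose proof (Rmin_l d1 d2). pose proof (Rmin_r d1 d2).
  apply Rabs_def2 in Hy.
  destruct (Rtotal_order y x) as [Hlt | [-> | Hgt]].
  - apply H2; lra.
  - rewrite Rminus_diag, Rabs_R0; exact Heps.
  - apply H1; lra.
Qed.

Lemma continuity_paste (h1 h2 : R -> R) x :
  continuity h1 -> continuity h2 -> h1 x = h2 x ->
  continuity (fun t => if Rle_dec t x then h1 t else h2 t).
Proof.
  intros C1 C2 Hx t0.
  destruct (Rtotal_order t0 x) as [Hlt | [-> | Hgt]].
  - apply continuity_pt_locally_ext with h1 (x - t0); [lra | | apply C1].
    intros y Hy. unfold Rdist in Hy. apply Rabs_def2 in Hy.
    destruct (Rle_dec y x); [reflexivity | lra].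
  - apply continuity_pt_one_sided; destruct (Rle_dec x x) as [_ | ]; [| lra | | lra].
    + intros eps Heps. destruct (proj1 (continuity_pt_Rabs h2 x) (C2 x) eps Heps)
        as [del [Hdel H]].
      exists del. split; [exact Hdel |]. intros y Hy.
      destruct (Rle_dec y x); [lra |]. rewrite Hx. apply H, Rabs_def1; lra.
    + intros eps Heps. destruct (proj1 (continuity_pt_Rabs h1 x) (C1 x) eps Heps)
        as [del [Hdel H]].
      exists del. split; [exact Hdel |]. intros y Hy.
      destruct (Rle_dec y x); [| lra]. apply H, Rabs_def1; lra.
  - apply continuity_pt_locally_ext with h2 (t0 - x); [lra | | apply C2].
    intros y Hy. unfold Rdist in Hy. apply Rabs_def2 in Hy.
    destruct (Rle_dec y x); [lra | reflexivity].
Qed.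

Lemma continuity_Lipschitz2 (op : R -> R -> R) (h1 h2 : R -> R) :
  (forall a b c d, Rabs (op a b - op c d) <= Rmax (Rabs (a - c)) (Rabs (b - d))) ->
  continuity h1 -> continuity h2 -> continuity (fun t => op (h1 t) (h2 t)).
Proof.
  intros Hop C1 C2 x. apply continuity_pt_Rabs. intros eps Heps.
  destruct (proj1 (continuity_pt_Rabs h1 x) (C1 x) eps Heps) as [d1 [Hd1 H1]].
  destruct (proj1 (continuity_pt_Rabs h2 x) (C2 x) eps Heps) as [d2 [Hd2 H2]].
  exists (Rmin d1 d2). split; [apply Rmin_pos; assumption |].
  intros y Hy. pose proof (Rmin_l d1 d2). pose proof (Rmin_r d1 d2).
  eapply Rle_lt_trans; [apply Hop |]. apply Rmax_lub_lt; [apply H1 | apply H2]; lra.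
Qed.

Lemma Rmax_Lipschitz a b c d : Rabs (Rmax a b - Rmax c d) <= Rmax (Rabs (a - c)) (Rabs (b - d)).
Proof.
  unfold Rmax, Rabs; repeat destruct Rle_dec; repeat destruct Rcase_abs; lra.
Qed.

Lemma Rmin_Lipschitz a b c d : Rabs (Rmin a b - Rmin c d) <= Rmax (Rabs (a - c)) (Rabs (b - d)).
Proof.
  unfold Rmin, Rmax, Rabs; repeat destruct Rle_dec; repeat destruct Rcase_abs; lra.
Qed.

Definition Rmedian (p q v : R) : R := Rmax (Rmin p q) (Rmin v (Rmax p q)).

Lemma Rmedian_cases p q v : Rmedian p q v = p \/ Rmedian p q v = q \/ Rmedian p q v = v.
Proof. unfold Rmedian, Rmax, Rmin; repeat destruct Rle_dec; auto. Qed.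

Lemma Rmedian_between p q v : Rmin p q <= Rmedian p q v <= Rmax p q.
Proof. unfold Rmedian, Rmax, Rmin; repeat destruct Rle_dec; lra. Qed.

Lemma Rmedian_l p q : Rmedian p q p = p.
Proof. unfold Rmedian, Rmax, Rmin; repeat destruct Rle_dec; lra. Qed.

Lemma Rmedian_r p q : Rmedian p q q = q.
Proof. unfold Rmedian, Rmax, Rmin; repeat destruct Rle_dec; lra. Qed.

Lemma continuity_Rmedian h1 h2 h3 :
  continuity h1 -> continuity h2 -> continuity h3 ->
  continuity (fun t => Rmedian (h1 t) (h2 t) (h3 t)).
Proof.
  intros C1 C2 C3. unfold Rmedian.
  apply (continuity_Lipschitz2 Rmax); [apply Rmax_Lipschitz | |].
  - apply (continuity_Lipschitz2 Rmin); [apply Rmin_Lipschitz | exact C1 | exact C2].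
  - apply (continuity_Lipschitz2 Rmin); [apply Rmin_Lipschitz | exact C3 |].
    apply (continuity_Lipschitz2 Rmax); [apply Rmax_Lipschitz | exact C1 | exact C2].
Qed.

Lemma Rabs_between_le p q w y r :
  Rmin p q <= w <= Rmax p q -> Rabs (p - y) <= r -> Rabs (q - y) <= r -> Rabs (w - y) <= r.
Proof. unfold Rmin, Rmax, Rabs; repeat destruct Rle_dec; repeat destruct Rcase_abs; lra. Qed.

Lemma approximate_minimizer {A : Type} (P : A -> Prop) (fits : R -> A -> Prop) s :
  0 < s -> (exists c, P c) ->
  (forall q c, P c -> fits q c -> 0 <= q) ->
  (forall q q' c, fits q c -> q <= q' -> fits q' c) ->
  exists w, P w /\ forall q c, P c -> fits q c -> fits (q + s) w.
Proof.
  intros Hs [c0 Pc0] Hpos Hmono.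
  destruct (classic (exists q c, P c /\ fits q c)) as [[q0 [c1 [Pc1 Hc1]]] | Hnone].
  - set (NegBounds := fun x => exists c, P c /\ fits (- x) c).
    assert (Hub : bound NegBounds).
    { exists 0. intros x [c [Pc Hc]]. apply Hpos in Hc; [lra | exact Pc]. }
    assert (Hne : exists x, NegBounds x).
    { exists (- q0), c1. rewrite Ropp_involutive. auto. }
    destruct (completeness NegBounds Hub Hne) as [M [HM HMleast]].
    assert (Hclose : exists x, NegBounds x /\ M - s < x).
    { apply NNPP. intros Hn. assert (M <= M - s); [| lra].
      apply HMleast. intros x Hx. apply Rnot_lt_le. intros Hlt. apply Hn. eauto. }
    destruct Hclose as [x [[w [Pw Hw]] Hx]].
    exists w. split; [exact Pw |]. intros q c Pc Hc.
    assert (- q <= M) by (apply HM; exists c; rewrite Ropp_involutive; auto).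
    apply Hmono with (- x); [exact Hw | lra].
  - exists c0. split; [exact Pc0 |]. intros q c Pc Hc. exfalso. eauto.
Qed.

Lemma closed_set_ext (D D' : R -> Prop) :
  (forall t, D t <-> D' t) -> closed_set D -> closed_set D'.
Proof.
  intros HD HC c Hc. destruct (HC c) as [del Hdel]; [intros Dc; apply Hc, HD, Dc |].
  exists del. intros y Hy HD'y. apply (Hdel y Hy), HD, HD'y.
Qed.

Lemma closed_set_pair x y : closed_set (fun t => t = x \/ t = y).
Proof.
  intros c Hc. unfold complementary in Hc.
  assert (Hx : 0 < Rabs (c - x)) by (apply Rabs_pos_lt; intros H; apply Hc; left; lra).
  assert (Hy : 0 < Rabs (c - y)) by (apply Rabs_pos_lt; intros H; apply Hc; right; lra).
  pose proof (Rmin_l (Rabs (c - x)) (Rabs (c - y))).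
  pose proof (Rmin_r (Rabs (c - x)) (Rabs (c - y))).
  exists (mkposreal _ (Rmin_pos _ _ Hx Hy)).
  intros t Ht Hxy. unfold disc in Ht; simpl in Ht.
  rewrite <- Rabs_Ropp, Ropp_minus_distr in Ht. destruct Hxy as [-> | ->]; lra.
Qed.

Lemma closed_set_singleton x : closed_set (fun t => t = x).
Proof. apply closed_set_ext with (fun t => t = x \/ t = x); [tauto | apply closed_set_pair]. Qed.

Lemma closed_set_full : closed_set (fun _ => True).
Proof. intros c Hc. exfalso. exact (Hc I). Qed.

Lemma closed_set_opp (E : R -> Prop) : closed_set E -> closed_set (fun t => E (- t)).
Proof.
  intros HE c Hc. destruct (HE (- c) Hc) as [del Hdel].
  exists del. intros y Hy Ey. apply (Hdel (- y)); [| exact Ey].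
  unfold disc in *. rewrite <- Rabs_Ropp. replace (- (- y - - c)) with (y - c) by ring. exact Hy.
Qed.

Definition left_gap_end (E : R -> Prop) (z a : R) : Prop :=
  E a /\ a < z /\ forall e, E e -> a < e -> z < e.

Definition right_gap_end (E : R -> Prop) (z b : R) : Prop :=
  E b /\ z < b /\ forall e, E e -> e < b -> e < z.

Lemma right_gap_end_opp E z b :
  right_gap_end E z b <-> left_gap_end (fun t => E (- t)) (- z) (- b).
Proof.
  unfold right_gap_end, left_gap_end. split.
  - intros [Eb [Hzb H]]. rewrite Ropp_involutive. split; [exact Eb | split; [lra |]].
    intros e Ee He. specialize (H (- e) Ee). lra.
  - rewrite Ropp_involutive. intros [Eb [Hzb H]]. split; [exact Eb | split; [lra |]].
    intros e Ee He. specialize (H (- e)). rewrite Ropp_involutive in H. specialize (H Ee). lra.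
Qed.

Lemma left_gap_end_unique E z a a' : left_gap_end E z a -> left_gap_end E z a' -> a = a'.
Proof.
  intros [Ea [Ha H]] [Ea' [Ha' H']].
  destruct (Rtotal_order a a') as [Hlt | [Heq | Hgt]]; [| exact Heq |].
  - specialize (H a' Ea' Hlt). lra.
  - specialize (H' a Ea Hgt). lra.
Qed.

Lemma right_gap_end_unique E z b b' : right_gap_end E z b -> right_gap_end E z b' -> b = b'.
Proof.
  rewrite !right_gap_end_opp. intros H H'.
  apply Ropp_eq_reg, (left_gap_end_unique _ _ _ _ H H').
Qed.

Lemma left_gap_end_exists E z e :
  closed_set E -> ~ E z -> E e -> e < z -> exists a, left_gap_end E z a.
Proof.
  intros HE Hz Ee Hez.
  set (Below := fun t => E t /\ t < z).
  assert (Hub : bound Below) by (exists z; intros t [_ Ht]; lra).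
  destruct (completeness Below Hub (ex_intro _ e (conj Ee Hez))) as [a [Ha Hleast]].
  assert (Hea : e <= a) by (apply Ha; split; assumption).
  assert (Haz : a <= z) by (apply Hleast; intros t [_ Ht]; lra).
  assert (Ea : E a).
  { apply NNPP. intros Hna. destruct (HE a Hna) as [del Hdel].
    assert (a <= a - del); [| destruct del; simpl in *; lra].
    apply Hleast. intros t [Et Htz]. apply Rnot_lt_le. intros Ht.
    apply (Hdel t); [| exact Et]. unfold disc. apply Rabs_def1; [| lra].
    assert (t <= a) by (apply Ha; split; assumption). destruct del; simpl in *; lra. }
  exists a. split; [exact Ea | split].
  - destruct (Req_dec a z) as [-> | ]; [contradiction | lra].
  - intros e' Ee' Hae'. apply Rnot_le_lt. intros He'z.
    destruct (Req_dec e' z) as [-> | ]; [contradiction |].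
    assert (e' <= a) by (apply Ha; split; [exact Ee' | lra]). lra.
Qed.

Lemma right_gap_end_exists E z e :
  closed_set E -> ~ E z -> E e -> z < e -> exists b, right_gap_end E z b.
Proof.
  intros HE Hz Ee Hze.
  destruct (left_gap_end_exists (fun t => E (- t)) (- z) (- e)) as [a Ha].
  - apply closed_set_opp, HE.
  - rewrite Ropp_involutive. exact Hz.
  - rewrite Ropp_involutive. exact Ee.
  - lra.
  - exists (- a). apply right_gap_end_opp. rewrite Ropp_involutive. exact Ha.
Qed.

Definition some_witness (P : R -> Prop) : option R :=
  match excluded_middle_informative (exists a, P a) with
  | left H => Some (proj1_sig (constructive_indefinite_description P H))
  | right _ => None
  end.

Lemma some_witness_spec P :
  match some_witness P with Some a => P a | None => ~ exists a, P a end.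
Proof.
  unfold some_witness. destruct excluded_middle_informative as [H | H]; [| exact H].
  exact (proj2_sig (constructive_indefinite_description P H)).
Qed.

Lemma some_witness_ext P Q : (forall a, P a <-> Q a) -> some_witness P = some_witness Q.
Proof.
  intros H. replace Q with P; [reflexivity |].
  apply functional_extensionality. intros a. apply propositional_extensionality, H.
Qed.

Definition left_end (E : R -> Prop) (z : R) : option R := some_witness (left_gap_end E z).
Definition right_end (E : R -> Prop) (z : R) : option R := some_witness (right_gap_end E z).

Lemma left_end_spec E z : closed_set E -> ~ E z ->
  match left_end E z with Some a => left_gap_end E z a | None => forall e, E e -> z < e end.
Proof.
  intros HE Hz. pose proof (some_witness_spec (left_gap_end E z)) as H.
  unfold left_end. destruct some_witness; [exact H |].
  intros e Ee. destruct (Rtotal_order e z) as [Hlt | [-> | Hgt]]; [| contradiction | exact Hgt].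
  exfalso. exact (H (left_gap_end_exists E z e HE Hz Ee Hlt)).
Qed.

Lemma right_end_spec E z : closed_set E -> ~ E z ->
  match right_end E z with Some b => right_gap_end E z b | None => forall e, E e -> e < z end.
Proof.
  intros HE Hz. pose proof (some_witness_spec (right_gap_end E z)) as H.
  unfold right_end. destruct some_witness; [exact H |].
  intros e Ee. destruct (Rtotal_order e z) as [Hlt | [-> | Hgt]]; [exact Hlt | contradiction |].
  exfalso. exact (H (right_gap_end_exists E z e HE Hz Ee Hgt)).
Qed.

Lemma left_end_eq E z a : left_gap_end E z a -> left_end E z = Some a.
Proof.
  intros Ha. pose proof (some_witness_spec (left_gap_end E z)) as H.
  unfold left_end. destruct some_witness as [a' |].
  - f_equal. exact (left_gap_end_unique E z a' a H Ha).
  - exfalso. exact (H (ex_intro _ a Ha)).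
Qed.

Lemma right_end_eq E z b : right_gap_end E z b -> right_end E z = Some b.
Proof.
  intros Hb. pose proof (some_witness_spec (right_gap_end E z)) as H.
  unfold right_end. destruct some_witness as [b' |].
  - f_equal. exact (right_gap_end_unique E z b' b H Hb).
  - exfalso. exact (H (ex_intro _ b Hb)).
Qed.

Lemma gap_ends_const (E : R -> Prop) u v y y' :
  (forall t, u < t < v -> ~ E t) -> u < y < v -> u < y' < v ->
  left_end E y = left_end E y' /\ right_end E y = right_end E y'.
Proof.
  intros Hfree Hy Hy'.
  assert (Hout : forall e, E e -> e <= u \/ v <= e).
  { intros e Ee. destruct (Rle_dec e u); [left; assumption |].
    destruct (Rle_dec v e); [right; assumption |]. exfalso. apply (Hfree e); [lra | exact Ee]. }
  split; apply some_witness_ext; intros c;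
    split; intros [Ec [Hc H]]; (split; [exact Ec |]);
    destruct (Hout c Ec); (split; [lra |]); intros e Ee He;
    specialize (H e Ee He); destruct (Hout e Ee); lra.
Qed.

Section CompleteConnectedFamily.

Variable G : fam.
Hypotheses (G_cont : cont_fam G) (G_complete : complete G) (G_connected : connected G).

Lemma complete_pointwise h :
  continuity h -> (forall t, exists g, G g /\ h t = g t) -> G h.
Proof.
  intros Ch H. apply G_complete; [exact Ch |]. intros t.
  destruct (H t) as [g [Gg Hg]]. exists g. split; assumption.
Qed.

Lemma connected_transition P u x y : G P -> G u -> x < y ->
  exists psi, G psi /\ (forall t, t <= x -> psi t = P t) /\ (forall t, y <= t -> psi t = u t) /\
    forall t, Rmin (P t) (u t) <= psi t <= Rmax (P t) (u t).
Proof.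
  intros GP Gu Hxy.
  destruct (G_connected P u GP Gu x y ltac:(lra)) as [k [Gk [Hkx Hky]]].
  set (m := fun t => Rmedian (P t) (u t) (k t)).
  set (psi := fun t => if Rle_dec t x then P t else if Rle_dec t y then m t else u t).
  assert (Hmx : m x = P x) by (unfold m; rewrite Hkx; apply Rmedian_l).
  assert (Hmy : m y = u y) by (unfold m; rewrite Hky; apply Rmedian_r).
  assert (Hcont : continuity psi).
  { apply continuity_paste; [apply G_cont, GP | apply continuity_paste | ].
    - apply continuity_Rmedian; apply G_cont; assumption.
    - apply G_cont, Gu.
    - exact Hmy.
    - destruct (Rle_dec x y); [now rewrite Hmx | lra]. }
  exists psi. split; [| split; [| split]].
  - apply complete_pointwise; [exact Hcont |]. intros t. unfold psi.
    destruct (Rle_dec t x); [exists P; auto |].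
    destruct (Rle_dec t y); [| exists u; auto].
    unfold m. destruct (Rmedian_cases (P t) (u t) (k t)) as [-> | [-> | ->]]; eauto.
  - intros t Ht. unfold psi. destruct (Rle_dec t x); [reflexivity | lra].
  - intros t Ht. unfold psi. destruct (Rle_dec t x); [lra |].
    destruct (Rle_dec t y); [replace t with y by lra; exact Hmy | reflexivity].
  - intros t. unfold psi.
    destruct (Rle_dec t x); [| destruct (Rle_dec t y); [apply Rmedian_between |]];
      split; [apply Rmin_l | apply Rmax_l | apply Rmin_r | apply Rmax_r].
Qed.

Lemma connected_bridge_near P u v a b del y0 r :
  G P -> G u -> G v -> 0 < del -> a + del < b - del ->
  (forall s, a <= s <= a + del -> Rabs (P s - y0) <= r) ->
  (forall s, a <= s <= b -> Rabs (u s - y0) <= r) ->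
  (forall s, b - del <= s <= b -> Rabs (v s - y0) <= r) ->
  exists c, G c /\ c a = P a /\ c b = v b /\ forall s, a <= s <= b -> Rabs (c s - y0) <= r.
Proof.
  intros GP Gu Gv Hdel Hab HP Hu Hv.
  destruct (connected_transition P u a (a + del) GP Gu ltac:(lra))
    as [c1 [Gc1 [Hc1l [Hc1r Hc1b]]]].
  destruct (connected_transition c1 v (b - del) b Gc1 Gv ltac:(lra))
    as [c [Gc [Hcl [Hcr Hcb]]]].
  exists c. split; [exact Gc | split; [| split]].
  - rewrite Hcl, Hc1l; lra.
  - apply Hcr; lra.
  - intros s Hs. destruct (Rle_dec s (b - del)).
    + rewrite Hcl by lra. destruct (Rle_dec s (a + del)).
      * apply (Rabs_between_le _ _ _ _ _ (Hc1b s)); [apply HP | apply Hu]; lra.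
      * rewrite Hc1r by lra. apply Hu; lra.
    + apply (Rabs_between_le _ _ _ _ _ (Hcb s)); [rewrite Hc1r by lra; apply Hu | apply Hv]; lra.
Qed.

End CompleteConnectedFamily.

Definition extension_property (G : fam) : Prop :=
  forall f E, continuity f -> closed_set E -> (forall y, E y -> union_graphs G (y, f y)) ->
    exists g, G g /\ forall x, E x -> f x = g x.

Section Extension.

Variables (G : fam) (f : R -> R) (E : R -> Prop).
Hypotheses (G_cont : cont_fam G) (G_complete : complete G) (G_connected : connected G)
  (G_nonempty : exists g, G g) (f_cont : continuity f) (E_closed : closed_set E)
  (E_covered : forall y, E y -> union_graphs G (y, f y)).

Definition pick_through (a : R) : R -> R :=
  epsilon (inhabits (fun _ => 0)) (fun h => G h /\ h a = f a).

Definition joins (a b : R) (w : R -> R) : Prop := G w /\ w a = f a /\ w b = f b.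

Definition stays_near (a b q : R) (w : R -> R) : Prop :=
  forall t, a <= t <= b -> Rabs (w t - f a) <= q.

(* The slack b - a avoids having to attain an infimum and vanishes on the small gaps near a
   point of E. *)
Definition near_optimal (a b : R) (w : R -> R) : Prop :=
  joins a b w /\ forall q c, joins a b c -> stays_near a b q c -> stays_near a b (q + (b - a)) w.

Definition gap_bridge (a b : R) : R -> R := epsilon (inhabits (fun _ => 0)) (near_optimal a b).

(* [None] stands for an unbounded side of the gap containing [y]. *)
Definition gap_fun (y : R) : R -> R :=
  match left_end E y, right_end E y with
  | Some a, Some b => gap_bridge a b
  | Some a, None => pick_through a
  | None, Some b => pick_through b
  | None, None => epsilon (inhabits (fun _ => 0)) G
  end.

Definition extension (y : R) : R :=
  if excluded_middle_informative (E y) then f y else gap_fun y y.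

Lemma pick_through_spec a : E a -> G (pick_through a) /\ pick_through a a = f a.
Proof.
  intros Ea. destruct (E_covered a Ea) as [h [Gh Hh]].
  unfold pick_through. apply epsilon_spec. exists h. split; [exact Gh | symmetry; exact Hh].
Qed.

Lemma gap_bridge_spec a b : E a -> E b -> a < b -> near_optimal a b (gap_bridge a b).
Proof.
  intros Ea Eb Hab. unfold gap_bridge. apply epsilon_spec.
  apply approximate_minimizer; [lra | | | ].
  - destruct (pick_through_spec a Ea) as [Ga Ha], (pick_through_spec b Eb) as [Gb Hb].
    destruct (G_connected _ _ Ga Gb a b ltac:(lra)) as [k [Gk [Hka Hkb]]].
    exists k. split; [exact Gk | split; congruence].
  - intros q c [_ [Hca _]] Hc. specialize (Hc a ltac:(lra)).
    rewrite Hca, Rminus_diag, Rabs_R0 in Hc. exact Hc.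
  - intros q q' c Hc Hq t Ht. specialize (Hc t Ht). lra.
Qed.

Lemma gap_fun_spec y : ~ E y ->
  G (gap_fun y) /\ (forall a, left_end E y = Some a -> gap_fun y a = f a) /\
  (forall b, right_end E y = Some b -> gap_fun y b = f b).
Proof.
  intros Hy. pose proof (left_end_spec E y E_closed Hy) as Hl.
  pose proof (right_end_spec E y E_closed Hy) as Hr.
  unfold gap_fun. destruct (left_end E y) as [a |], (right_end E y) as [b |].
  - destruct Hl as [Ea [Hay _]], Hr as [Eb [Hyb _]].
    destruct (gap_bridge_spec a b Ea Eb ltac:(lra)) as [[GW [HWa HWb]] _].
    split; [exact GW | split; intros c Hc; injection Hc as <-; assumption].
  - destruct Hl as [Ea _], (pick_through_spec a Ea) as [Ga Ha].
    split; [exact Ga | split; intros c Hc; [injection Hc as <-; exact Ha | discriminate]].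
  - destruct Hr as [Eb _], (pick_through_spec b Eb) as [Gb Hb].
    split; [exact Gb | split; intros c Hc; [discriminate | injection Hc as <-; exact Hb]].
  - split; [apply epsilon_spec, G_nonempty | split; intros c Hc; discriminate].
Qed.

Lemma extension_on_E y : E y -> extension y = f y.
Proof. intros Ey. unfold extension. destruct excluded_middle_informative; [reflexivity | contradiction]. Qed.

Lemma extension_eq_gap_fun u v y0 y :
  (forall t, u < t < v -> ~ E t) -> u < y0 < v -> u < y < v -> extension y = gap_fun y0 y.
Proof.
  intros Hfree Hy0 Hy. unfold extension.
  destruct excluded_middle_informative as [Ey | _]; [exfalso; exact (Hfree y Hy Ey) |].
  unfold gap_fun. destruct (gap_ends_const E u v y y0 Hfree Hy Hy0) as [-> ->]. reflexivity.
Qed.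

Lemma close_competitor z : E z -> forall e, 0 < e -> exists eta, 0 < eta /\
  forall a b, E a -> E b -> a < b -> z - eta < a -> b < z + eta ->
    exists c, joins a b c /\ forall s, a <= s <= b -> Rabs (c s - f z) <= 2 * e.
Proof.
  intros Ez e He.
  destruct (pick_through_spec z Ez) as [Gz Hz].
  destruct (proj1 (continuity_pt_Rabs f z) (f_cont z) e He) as [h1 [Hh1 Hf]].
  destruct (proj1 (continuity_pt_Rabs _ z) (G_cont _ Gz z) e He) as [h2 [Hh2 Hpz]].
  rewrite Hz in Hpz.
  exists (Rmin h1 h2). split; [apply Rmin_pos; assumption |].
  pose proof (Rmin_l h1 h2). pose proof (Rmin_r h1 h2).
  intros a b Ea Eb Hab Ha Hb.
  destruct (pick_through_spec a Ea) as [Ga Hpa], (pick_through_spec b Eb) as [Gb Hpb].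
  destruct (proj1 (continuity_pt_Rabs _ a) (G_cont _ Ga a) e He) as [da [Hda Hnear_a]].
  destruct (proj1 (continuity_pt_Rabs _ b) (G_cont _ Gb b) e He) as [db [Hdb Hnear_b]].
  rewrite Hpa in Hnear_a. rewrite Hpb in Hnear_b.
  set (del := Rmin (Rmin da db) ((b - a) / 4) / 2).
  assert (Hdel : 0 < del /\ del < da /\ del < db /\ del <= (b - a) / 8).
  { assert (0 < Rmin (Rmin da db) ((b - a) / 4)) by (repeat apply Rmin_pos; lra).
    pose proof (Rmin_l (Rmin da db) ((b - a) / 4)). pose proof (Rmin_r (Rmin da db) ((b - a) / 4)).
    pose proof (Rmin_l da db). pose proof (Rmin_r da db). unfold del. lra. }
  assert (Hstart : forall s, a <= s <= a + del -> Rabs (pick_through a s - f z) <= 2 * e).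
  { intros s Hs. assert (Rabs (pick_through a s - f a) < e) by (apply Hnear_a, Rabs_def1; lra).
    assert (Rabs (f a - f z) < e) by (apply Hf, Rabs_def1; lra).
    pose proof (Rdist_tri (pick_through a s) (f z) (f a)). unfold Rdist in *. lra. }
  assert (Hmiddle : forall s, a <= s <= b -> Rabs (pick_through z s - f z) <= 2 * e).
  { intros s Hs. left. apply Rlt_trans with e; [apply Hpz, Rabs_def1 | ]; lra. }
  assert (Hend : forall s, b - del <= s <= b -> Rabs (pick_through b s - f z) <= 2 * e).
  { intros s Hs. assert (Rabs (pick_through b s - f b) < e) by (apply Hnear_b, Rabs_def1; lra).
    assert (Rabs (f b - f z) < e) by (apply Hf, Rabs_def1; lra).
    pose proof (Rdist_tri (pick_through b s) (f z) (f b)). unfold Rdist in *. lra. }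
  destruct (connected_bridge_near G G_cont G_complete G_connected _ _ _ a b del (f z) (2 * e)
    Ga Gz Gb ltac:(lra) ltac:(lra) Hstart Hmiddle Hend) as [c [Gc [Hca [Hcb Hc]]]].
  exists c. split; [split; [exact Gc | split; congruence] | exact Hc].
Qed.

Lemma gap_bridge_close z : E z -> forall eps, 0 < eps -> exists eta, 0 < eta /\
  forall a b t, E a -> E b -> a < b -> z - eta < a -> b < z + eta -> a <= t <= b ->
    Rabs (gap_bridge a b t - f z) <= eps.
Proof.
  intros Ez eps Heps. set (e := eps / 6).
  assert (He : 0 < e) by (unfold e; lra).
  destruct (close_competitor z Ez e He) as [h1 [Hh1 Hcomp]].
  destruct (proj1 (continuity_pt_Rabs f z) (f_cont z) e He) as [h2 [Hh2 Hf]].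
  exists (Rmin (Rmin h1 h2) e). split; [repeat apply Rmin_pos; assumption |].
  pose proof (Rmin_l (Rmin h1 h2) e). pose proof (Rmin_r (Rmin h1 h2) e).
  pose proof (Rmin_l h1 h2). pose proof (Rmin_r h1 h2).
  intros a b t Ea Eb Hab Ha Hb Ht.
  destruct (Hcomp a b Ea Eb Hab ltac:(lra) ltac:(lra)) as [c [Jc Hc]].
  assert (Hfa : Rabs (f a - f z) < e) by (apply Hf, Rabs_def1; lra).
  assert (Hstay : stays_near a b (3 * e) c).
  { intros s Hs. specialize (Hc s Hs).
    pose proof (Rdist_tri (c s) (f a) (f z)). pose proof (Rabs_minus_sym (f a) (f z)).
    unfold Rdist in *. lra. }
  destruct (gap_bridge_spec a b Ea Eb Hab) as [_ Hopt].
  specialize (Hopt _ c Jc Hstay t Ht).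
  pose proof (Rdist_tri (gap_bridge a b t) (f z) (f a)). unfold Rdist in *. unfold e in *. lra.
Qed.

Lemma extension_close_near z : E z -> forall eps, 0 < eps -> exists eta, 0 < eta /\
  forall e1 e2 y, E e1 -> E e2 -> z - eta < e1 -> e2 < z + eta -> e1 <= y <= e2 ->
    Rabs (extension y - f z) <= eps.
Proof.
  intros Ez eps Heps.
  destruct (gap_bridge_close z Ez eps Heps) as [h1 [Hh1 Hbridge]].
  destruct (proj1 (continuity_pt_Rabs f z) (f_cont z) eps Heps) as [h2 [Hh2 Hf]].
  exists (Rmin h1 h2). split; [apply Rmin_pos; assumption |].
  pose proof (Rmin_l h1 h2). pose proof (Rmin_r h1 h2).
  intros e1 e2 y Ee1 Ee2 He1 He2 Hy.
  destruct (classic (E y)) as [Ey | Ny].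
  - rewrite extension_on_E by exact Ey. left. apply Hf, Rabs_def1; lra.
  - pose proof (left_end_spec E y E_closed Ny) as Hl.
    pose proof (right_end_spec E y E_closed Ny) as Hr.
    assert (Hy' : e1 < y < e2).
    { split; apply Rnot_le_lt; intros Hle; apply Ny;
        [replace y with e1 by lra | replace y with e2 by lra]; assumption. }
    unfold extension. destruct excluded_middle_informative as [Ey | _]; [contradiction |].
    unfold gap_fun. destruct (left_end E y) as [a |], (right_end E y) as [b |];
      [| specialize (Hr e2 Ee2); lra | specialize (Hl e1 Ee1); lra | specialize (Hl e1 Ee1); lra].
    destruct Hl as [Ea [Hay Hal]], Hr as [Eb [Hyb Hbr]].
    assert (e1 <= a) by (apply Rnot_lt_le; intros Hlt; specialize (Hal e1 Ee1 Hlt); lra).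
    assert (b <= e2) by (apply Rnot_lt_le; intros Hlt; specialize (Hbr e2 Ee2 Hlt); lra).
    apply Hbridge; auto; lra.
Qed.

Lemma extension_right_limit z : E z -> forall eps, 0 < eps -> exists del, 0 < del /\
  forall y, z < y < z + del -> Rabs (extension y - f z) < eps.
Proof.
  intros Ez eps Heps.
  destruct (extension_close_near z Ez (eps / 2) ltac:(lra)) as [eta [Heta Hnear]].
  destruct (classic (exists e, E e /\ z < e < z + eta)) as [[e [Ee He]] | Hgap].
  - exists (e - z). split; [lra |]. intros y Hy.
    assert (Rabs (extension y - f z) <= eps / 2) by (apply (Hnear z e); auto; lra). lra.
  - assert (Hfree : forall t, z < t < z + eta -> ~ E t) by (intros t Ht Et; apply Hgap; eauto).
    set (y0 := z + eta / 2).
    assert (Hy0 : z < y0 < z + eta) by (unfold y0; lra).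
    assert (Hend : left_end E y0 = Some z).
    { apply left_end_eq. split; [exact Ez | split; [lra |]]. intros e Ee Hze.
      apply Rnot_le_lt. intros Hle. apply (Hfree e); [lra | exact Ee]. }
    destruct (gap_fun_spec y0 (Hfree y0 Hy0)) as [Gy0 [Hleft _]].
    destruct (proj1 (continuity_pt_Rabs _ z) (G_cont _ Gy0 z) eps Heps) as [d [Hd Hcont]].
    rewrite (Hleft z Hend) in Hcont.
    exists (Rmin d eta). split; [apply Rmin_pos; assumption |].
    pose proof (Rmin_l d eta). pose proof (Rmin_r d eta).
    intros y Hy. rewrite (extension_eq_gap_fun z (z + eta) y0 y Hfree Hy0) by lra.
    apply Hcont, Rabs_def1; lra.
Qed.

Lemma extension_left_limit z : E z -> forall eps, 0 < eps -> exists del, 0 < del /\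
  forall y, z - del < y < z -> Rabs (extension y - f z) < eps.
Proof.
  intros Ez eps Heps.
  destruct (extension_close_near z Ez (eps / 2) ltac:(lra)) as [eta [Heta Hnear]].
  destruct (classic (exists e, E e /\ z - eta < e < z)) as [[e [Ee He]] | Hgap].
  - exists (z - e). split; [lra |]. intros y Hy.
    assert (Rabs (extension y - f z) <= eps / 2) by (apply (Hnear e z); auto; lra). lra.
  - assert (Hfree : forall t, z - eta < t < z -> ~ E t) by (intros t Ht Et; apply Hgap; eauto).
    set (y0 := z - eta / 2).
    assert (Hy0 : z - eta < y0 < z) by (unfold y0; lra).
    assert (Hend : right_end E y0 = Some z).
    { apply right_end_eq. split; [exact Ez | split; [lra |]]. intros e Ee Hez.
      apply Rnot_le_lt. intros Hle. apply (Hfree e); [lra | exact Ee]. }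
    destruct (gap_fun_spec y0 (Hfree y0 Hy0)) as [Gy0 [_ Hright]].
    destruct (proj1 (continuity_pt_Rabs _ z) (G_cont _ Gy0 z) eps Heps) as [d [Hd Hcont]].
    rewrite (Hright z Hend) in Hcont.
    exists (Rmin d eta). split; [apply Rmin_pos; assumption |].
    pose proof (Rmin_l d eta). pose proof (Rmin_r d eta).
    intros y Hy. rewrite (extension_eq_gap_fun (z - eta) z y0 y Hfree Hy0) by lra.
    apply Hcont, Rabs_def1; lra.
Qed.

Lemma extension_continuous : continuity extension.
Proof.
  intros z. destruct (classic (E z)) as [Ez | Nz].
  - apply continuity_pt_one_sided; rewrite (extension_on_E z Ez);
      [apply extension_right_limit | apply extension_left_limit]; exact Ez.
  - destruct (E_closed z Nz) as [[d Hd] Hdisc]. simpl in Hdisc.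
    assert (Hfree : forall t, z - d < t < z + d -> ~ E t).
    { intros t Ht. apply Hdisc. unfold disc; simpl. apply Rabs_def1; lra. }
    apply continuity_pt_locally_ext with (gap_fun z) d; [exact Hd | | ].
    + intros y Hy. unfold Rdist in Hy. apply Rabs_def2 in Hy.
      symmetry. apply (extension_eq_gap_fun (z - d) (z + d)); [exact Hfree | lra | lra].
    + apply G_cont, (gap_fun_spec z Nz).
Qed.

Lemma extension_in_G : G extension.
Proof.
  apply (complete_pointwise G G_complete _ extension_continuous). intros t.
  destruct (classic (E t)) as [Et | Nt].
  - destruct (E_covered t Et) as [g [Gg Hg]]. exists g.
    rewrite extension_on_E by exact Et. split; [exact Gg | exact Hg].
  - exists (gap_fun t). split; [apply (gap_fun_spec t Nt) |].
    unfold extension. destruct excluded_middle_informative; [contradiction | reflexivity].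
Qed.

End Extension.

Theorem extension_property_of_complete_connected (G : fam) :
  cont_fam G -> complete G -> connected G -> (exists g, G g) -> extension_property G.
Proof.
  intros HGc Hc Hcn Hne f E Cf HE Hcov.
  exists (extension G f E). split.
  - apply extension_in_G; assumption.
  - intros x Ex. symmetry. apply extension_on_E, Ex.
Qed.

Lemma R_G_singleton G h y :
  continuity h -> (R_G G h (fun t => t = y) <-> union_graphs G (y, h y)).
Proof.
  intros Ch. split.
  - intros [_ [_ [g [Gg Hg]]]]. exists g. split; [exact Gg | apply Hg; reflexivity].
  - intros [g [Gg Hg]]. split; [exact Ch | split; [apply closed_set_singleton |]].
    exists g. split; [exact Gg | intros t ->; exact Hg].
Qed.

Lemma E_G_singleton G F y : cont_fam F ->
  (E_G G F (fun t => t = y) <-> forall h, F h -> union_graphs G (y, h y)).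
Proof.
  intros CF. split.
  - intros [_ HR] h Fh. apply (R_G_singleton G h y (CF h Fh)), HR, Fh.
  - intros Hcov. split; [apply closed_set_singleton |].
    intros h Fh. apply (R_G_singleton G h y (CF h Fh)), Hcov, Fh.
Qed.

Lemma extension_property_of_K_G G :
  (forall F, cont_fam F -> exists X, seteq (E_G G F) (CL_sub X)) -> extension_property G.
Proof.
  intros HK f E Cf HE Hcov.
  assert (CF : cont_fam (fun h => h = f)) by (intros h ->; exact Cf).
  destruct (HK _ CF) as [X HX].
  assert (HEX : forall y, E y -> X y).
  { intros y Ey. apply (HX (fun t => t = y)); [| reflexivity].
    apply E_G_singleton; [exact CF |]. intros h ->. apply Hcov, Ey. }
  assert (HEG : E_G G (fun h => h = f) E) by (apply HX; split; assumption).
  destruct HEG as [_ HR]. destruct (HR f eq_refl) as [_ [_ Hg]]. exact Hg.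
Qed.

Lemma complete_of_extension_property G : extension_property G -> complete G.
Proof.
  intros Hext g Cg Hg.
  destruct (Hext g (fun _ => True) Cg closed_set_full (fun y _ => Hg y)) as [g' [Gg' Heq]].
  replace g with g'; [exact Gg' |].
  apply functional_extensionality. intros t. symmetry. apply Heq, I.
Qed.

Lemma connected_of_extension_property G : extension_property G -> connected G.
Proof.
  intros Hext f g Gf Gg x y Hxy.
  set (k := fun t => f x + (g y - f x) / (y - x) * (t - x)).
  assert (Ck : continuity k) by (intros t; unfold k; reg).
  assert (Hkx : k x = f x) by (unfold k; ring).
  assert (Hky : k y = g y) by (unfold k; field; lra).
  destruct (Hext k (fun t => t = x \/ t = y) Ck (closed_set_pair x y)) as [h [Gh Hh]].
  - intros t [-> | ->]; [exists f; rewrite Hkx | exists g; rewrite Hky]; split; auto.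
  - exists h. split; [exact Gh |]. rewrite <- Hkx, <- Hky. split; apply eq_sym, Hh; auto.
Qed.

Lemma single_defect_of_K_G G :
  (forall X, K_G G (CL_sub X)) ->
  forall x, exists f, continuity f /\ forall y, ~ union_graphs G (y, f y) <-> y = x.
Proof.
  intros HK x. destruct (HK (fun y => y <> x)) as [F [CF HS]].
  assert (Hcov : forall y, y <> x -> forall h, F h -> union_graphs G (y, h y)).
  { intros y Hy. apply E_G_singleton; [exact CF |].
    apply HS. split; [apply closed_set_singleton | intros t ->; exact Hy]. }
  assert (Hdefect : exists h, F h /\ ~ union_graphs G (x, h x)).
  { apply NNPP. intros Hn.
    assert (Hx : E_G G F (fun t => t = x)).
    { apply E_G_singleton; [exact CF |]. intros h Fh. apply NNPP. intros Hu. apply Hn. eauto. }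
    apply HS in Hx. destruct Hx as [_ Hx]. exact (Hx x eq_refl eq_refl). }
  destruct Hdefect as [h [Fh Hh]].
  exists h. split; [exact (CF h Fh) |]. intros y. split.
  - intros Hu. apply NNPP. intros Hy. exact (Hu (Hcov y Hy h Fh)).
  - intros ->. exact Hh.
Qed.

Definition covered_points (G F : fam) (y : R) : Prop :=
  forall h, F h -> union_graphs G (y, h y).

Definition defect_outside (G : fam) (X : R -> Prop) (h : R -> R) : Prop :=
  continuity h /\ exists x, ~ X x /\ forall y, ~ union_graphs G (y, h y) <-> y = x.

Lemma E_G_covered_points G F :
  extension_property G -> cont_fam F -> seteq (E_G G F) (CL_sub (covered_points G F)).
Proof.
  intros Hext CF E. split.
  - intros [HE HR]. split; [exact HE |]. intros y Ey h Fh.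
    destruct (HR h Fh) as [_ [_ [g [Gg Hg]]]]. exists g. split; [exact Gg | apply Hg, Ey].
  - intros [HE Hcov]. split; [exact HE |]. intros h Fh.
    split; [exact (CF h Fh) | split; [exact HE |]].
    apply Hext; [exact (CF h Fh) | exact HE |]. intros y Ey. apply Hcov; assumption.
Qed.

Lemma CL_sub_defect_outside G X :
  extension_property G ->
  (forall x, exists f, continuity f /\ forall y, ~ union_graphs G (y, f y) <-> y = x) ->
  seteq (CL_sub X) (E_G G (defect_outside G X)).
Proof.
  intros Hext Hdef E. split.
  - intros [HE HEX]. split; [exact HE |]. intros h [Ch [x [Hx Hdx]]].
    split; [exact Ch | split; [exact HE |]].
    apply Hext; [exact Ch | exact HE |]. intros y Ey.
    apply NNPP. intros Hu. apply Hx. rewrite <- (proj1 (Hdx y) Hu). apply HEX, Ey.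
  - intros [HE HR]. split; [exact HE |]. intros y Ey. apply NNPP. intros Hy.
    destruct (Hdef y) as [h [Ch Hdy]].
    destruct (HR h (conj Ch (ex_intro _ y (conj Hy Hdy)))) as [_ [_ [g [Gg Hg]]]].
    apply (proj2 (Hdy y) eq_refl). exists g. split; [exact Gg | apply Hg, Ey].
Qed.

Theorem corollary4p6 (G : fam) :
  cont_fam G -> (exists g, G g) ->
  ((forall S : (R -> Prop) -> Prop,
      K_G G S <-> exists X : R -> Prop, seteq S (CL_sub X))
   <->
   (complete G /\ connected G /\
    forall x : R, exists f : R -> R, continuity f /\
      forall y : R, ~ union_graphs G (y, f y) <-> y = x)).
Proof.
  intros HGc HGne. split.
  - intros HK.
    assert (Hext : extension_property G).
    { apply extension_property_of_K_G. intros F CF.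
      apply HK. exists F. split; [exact CF | intros E; reflexivity]. }
    split; [| split].
    + apply complete_of_extension_property, Hext.
    + apply connected_of_extension_property, Hext.
    + apply single_defect_of_K_G. intros X. apply HK. exists X. intros E. reflexivity.
  - intros [Hc [Hcn Hdef]] S.
    pose proof (extension_property_of_complete_connected G HGc Hc Hcn HGne) as Hext.
    split.
    + intros [F [CF HS]]. exists (covered_points G F).
      intros E. rewrite (HS E). apply E_G_covered_points; assumption.
    + intros [X HS]. exists (defect_outside G X). split; [intros h [Ch _]; exact Ch |].
      intros E. rewrite (HS E). apply CL_sub_defect_outside; assumption.
Qed.
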